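(* The clique number of the skeleton of $\mathrm{PYR}(n)$ satisfies $\omega(\mathrm{PYR}(n))=\Theta(n^2)$ as $n\to\infty$; that is, there are constants $c_1,c_2>0$ such that $c_1 n^2\le \omega(\mathrm{PYR}(n))\le c_2 n^2$ for all sufficiently large $n$.
   Context: Let $K_n$ be the complete undirected graph on vertex set $\{1,\dots,n\}$ with edge set $E$. A Hamiltonian cycle $\langle 1,i_1,\dots,i_r,n,j_1,\dots,j_{n-r-2}\rangle$ is called a pyramidal tour if $i_1<i_2<\dots<i_r$ and $j_1>j_2>\dots>j_{n-r-2}$; tours are undirected. Let $PT_n$ be the set of all pyramidal tours. For $x\in PT_n$ its characteristic vector $x^v\in\mathbb{R}^E$ has $x^v_e=1$ if edge $e$ lies in $x$ and $0$ otherwise. The pyramidal tours polytope is $\mathrm{PYR}(n)=\operatorname{conv}\{x^v : x\in PT_n\}$. The skeleton of a polytope is the graph whose vertices are the polytope's vertices and whose edges are its one-dimensional faces. $\omega(\mathrm{PYR}(n))$ denotes the clique number (maximum number of pairwise adjacent vertices) of the skeleton of $\mathrm{PYR}(n)$. *)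

From HB Require Import structures.
From mathcomp Require Import all_boot all_order all_algebra.
Set Implicit Arguments. Unset Strict Implicit. Unset Printing Implicit Defensive.
Import Order.TTheory GRing.Theory Num.Theory.
Local Open Scope ring_scope.

(* Vertices of K_n are 0,...,n-1 (standing for 1,...,n).  An edge {i,j} is
   encoded by the pair (i,j) with i < j; vectors in R^E are finite functions
   on 'I_n * 'I_n whose entries with i >= j are ignored. *)

Definition pyramidal (n : nat) (s : seq nat) : Prop :=
  (3 <= n)%N /\ perm_eq s (iota 0 n) /\
  exists a b : seq nat,
    s = 0%N :: a ++ n.-1 :: b /\ sorted ltn a /\ sorted [rel x y | (y < x)%N] b.

Definition tour_edge (s : seq nat) (i j : nat) : bool :=
  (j == next s i) || (i == next s j).

Definition charvec (R : realFieldType) (n : nat) (s : seq nat)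
  : {ffun 'I_n * 'I_n -> R} :=
  [ffun e : 'I_n * 'I_n =>
     if ((e.1 < e.2)%N && tour_edge s e.1 e.2) then (1 : R) else 0].

Definition PYRpts (R : realFieldType) (n : nat) (v : {ffun 'I_n * 'I_n -> R}) : Prop :=
  exists s, pyramidal n s /\ v = charvec R n s.

Definition dotE (R : realFieldType) (n : nat) (c v : {ffun 'I_n * 'I_n -> R}) : R :=
  \sum_(e : 'I_n * 'I_n | (e.1 < e.2)%N) c e * v e.

Definition is_vertex (R : realFieldType) (n : nat)
  (P : {ffun 'I_n * 'I_n -> R} -> Prop) (v : {ffun 'I_n * 'I_n -> R}) : Prop :=
  P v /\ exists c, forall z, P z -> z != v -> dotE c z < dotE c v.

(* x, y are adjacent in the skeleton of conv(P): the segment [x,y] (x <> y)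
   is a face of conv(P), i.e. the set of maximizers of some linear functional *)
Definition adjacent (R : realFieldType) (n : nat)
  (P : {ffun 'I_n * 'I_n -> R} -> Prop) (x y : {ffun 'I_n * 'I_n -> R}) : Prop :=
  x != y /\ is_vertex P x /\ is_vertex P y /\
  exists c, dotE c x = dotE c y /\
    forall z, P z -> z != x -> z != y -> dotE c z < dotE c x.

Definition is_clique (R : realFieldType) (n : nat)
  (P : {ffun 'I_n * 'I_n -> R} -> Prop) (Q : seq {ffun 'I_n * 'I_n -> R}) : Prop :=
  uniq Q /\ (forall x, x \in Q -> is_vertex P x) /\
  (forall x y, x \in Q -> y \in Q -> x != y -> adjacent P x y).

From HB Require Import structures.
From mathcomp Require Import all_boot all_order all_algebra.
From mathcomp Require Import zify lra.
Import Order.TTheory GRing.Theory Num.Theory.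

Set Implicit Arguments. Unset Strict Implicit. Unset Printing Implicit Defensive.

(* A pyramidal tour is determined by its cuts: the positions [k] such that [k]
   and [k+1] lie on different monotone paths.  Its edge set is read off the
   cuts: steps [{k, k+1}] away from cuts, and jumps [{p, q+1}] between
   consecutive cuts [p < q].

   Take the tours with exactly two cuts [i <= h < j], [h] the
   middle position.  For two of them, the functional charging [-1] to every
   edge used by neither vanishes on both and is negative on any other tour:
   a tour using only their edges must, jump by jump, follow one of them.  This
   gives a clique of about [n^2 / 4] tours.

   If two tours of a clique shared a cut [c] and differed both
   before and after [c], exchanging their cuts beyond [c] would give two other
   tours with the same edge sum, contradicting adjacency.  In a family of cut
   sets without such crossings, a set [x] is determined by the largest first
   difference [U] with another member at which [x] has a cut, together with
   the last cut of [x] below [U]; hence there are at most [(n-2)^2] of them. *)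

(** * Families of words without crossings *)

Lemma bigmax_seq_attained (I : eqType) (r : seq I) (P : pred I) (F : I -> nat) :
  0 < \max_(i <- r | P i) F i ->
  exists i, [/\ i \in r, P i & F i = \max_(i <- r | P i) F i].
Proof.
elim: r => [|h t IH]; first by rewrite big_nil.
rewrite big_cons; case: ifP => Ph; last first.
  by move=> /IH [i [it Pi Fi]]; exists i; rewrite inE it orbT.
rewrite /maxn; case: (ltnP (F h) (\max_(j <- t | P j) F j)) => _.
  by move=> /IH [i [it Pi Fi]]; exists i; rewrite inE it orbT.
by exists h; rewrite inE eqxx.
Qed.

Section FirstDifference.

Variables (T : Type) (f : T -> nat -> bool) (K : nat).

(* The first position in [1, K] where the words [f x] and [f y] differ,
   or [K.+1] if there is none. *)
Definition first_diff (x y : T) : nat :=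
  (find (fun k => f x k != f y k) (iota 1 K)).+1.

Lemma first_diffC x y : first_diff x y = first_diff y x.
Proof. by congr _.+1; apply: eq_find => k; rewrite eq_sym. Qed.

Lemma eq_before_first_diff x y k :
  0 < k < first_diff x y -> f x k = f y k.
Proof.
rewrite /first_diff => /andP[k0 kd]; set m := find _ _ in kd.
have mK : m <= K by rewrite -(size_iota 1 K) find_size.
have km : k.-1 < m by lia.
have := before_find 0 km; rewrite nth_iota; last by lia.
by rewrite (_ : 1 + k.-1 = k) //; [move=> /negbFE/eqP | lia].
Qed.

Lemma neq_at_first_diff x y :
  first_diff x y <= K -> f x (first_diff x y) != f y (first_diff x y).
Proof.
rewrite /first_diff => dK.
have ds : find (fun k => f x k != f y k) (iota 1 K) < size (iota 1 K) by rewrite size_iota.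
have := nth_find 0 (_ : has (fun k => f x k != f y k) (iota 1 K)).
by rewrite has_find => /(_ ds); rewrite nth_iota ?add1n // -(size_iota 1 K).
Qed.

Lemma first_diff_le x y k : 0 < k -> f x k != f y k -> first_diff x y <= k.
Proof.
move=> k0; apply: contraR; rewrite -ltnNge => kd.
by rewrite (@eq_before_first_diff x y k) ?k0 ?kd.
Qed.

End FirstDifference.

Section NoncrossingFamily.

Variables (T : eqType) (f : T -> nat -> bool) (K : nat) (F : seq T).

Hypothesis F_uniq : uniq F.
Hypothesis F_separated : forall x y, x \in F -> y \in F -> x != y ->
  exists k, 0 < k <= K /\ f x k != f y k.
Hypothesis F_noncrossing : forall x y, x \in F -> y \in F -> x != y ->
  forall c d1 d2, 0 < d1 < c -> c < d2 <= K ->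
  f x c -> f y c -> f x d1 != f y d1 -> f x d2 != f y d2 -> False.

Local Notation fd := (first_diff f K).

Let first_diff_le_K x y : x \in F -> y \in F -> x != y -> fd x y <= K.
Proof.
move=> xF yF xy; have [k [/andP[k0 kK] fk]] := F_separated xF yF xy.
by apply: leq_trans kK; exact: first_diff_le.
Qed.

Let split_from y x := (fd y x <= K) && f x (fd y x).

(* [max_split x] is the largest first difference of [x] with another word of
   [F] at which [x] has a 1; [max_one_below x] is the last 1 of [x] before it.
   The pair of them determines [x]. *)
Let max_split x := \max_(y <- F | split_from y x) fd y x.

Let max_one_below x := \max_(k <- iota 1 K | (k < max_split x) && f x k) k.

Let max_split_ge x y : y \in F -> split_from y x -> fd y x <= max_split x.
Proof. by move=> yF w; exact: (@leq_bigmax_seq _ _ (split_from^~ x) (fd^~ x) y). Qed.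

Let max_split_attained x : 0 < max_split x ->
  exists y, [/\ y \in F, split_from y x & fd y x = max_split x].
Proof. exact: bigmax_seq_attained. Qed.

Let max_one_below_ge x k :
  0 < k <= K -> k < max_split x -> f x k -> k <= max_one_below x.
Proof.
move=> kK kU fxk; apply: (@leq_bigmax_seq _ _ _ id k) => //; last by rewrite kU.
by rewrite mem_iota; lia.
Qed.

Let max_one_below_spec x : 0 < max_one_below x ->
  f x (max_one_below x) && (max_one_below x < max_split x).
Proof. by rewrite /max_one_below => /bigmax_seq_attained [k [_ /andP[kU fxk] <-]]; rewrite fxk. Qed.

Let max_split_one x : 0 < max_split x -> f x (max_split x).
Proof. by case/max_split_attained => y [_ /andP[_ fx] <-]. Qed.

Let first_diff_lt_max_split x y : x \in F -> y \in F -> x != y ->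
  max_split x = max_split y -> fd x y < max_split x.
Proof.
move=> xF yF xy eU; have dK := first_diff_le_K xF yF xy.
have dne := neq_at_first_diff dK.
have dU : fd x y <= max_split x.
  case fyd: (f y (fd x y)).
    by rewrite eU; apply: (max_split_ge xF); rewrite /split_from dK fyd.
  have fxd : f x (fd x y) by move: dne; rewrite fyd; case: (f x _).
  by rewrite first_diffC; apply: (max_split_ge yF); rewrite /split_from first_diffC dK fxd.
have U0 : 0 < max_split x by apply: leq_trans dU.
rewrite ltn_neqAle dU andbT; apply: contra dne => /eqP ->.
by rewrite max_split_one // eU max_split_one // -eU.
Qed.

Let signature_inj : {in F &, injective (fun x => (max_split x, max_one_below x))}.
Proof.
move=> x y xF yF [eU eQ]; apply/eqP/negPn/negP => xy.
have dU := first_diff_lt_max_split xF yF xy eU.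
have dK := first_diff_le_K xF yF xy.
have dne := neq_at_first_diff dK.
set d := fd x y in dU dK dne.
have d0 : 0 < d by [].
set U := max_split x in eU dU.
have dQ : d <= max_one_below x.
  case fxd: (f x d); first by apply: max_one_below_ge; rewrite ?fxd //; lia.
  have fyd : f y d by move: dne; rewrite fxd; case: (f y d).
  by rewrite eQ; apply: max_one_below_ge; rewrite -?eU //; lia.
set Q := max_one_below x in eQ dQ.
have /andP[fxQ QU] := max_one_below_spec (leq_trans d0 dQ).
have /andP[fyQ _] := max_one_below_spec (ltac:(rewrite -eQ; lia) : 0 < max_one_below y).
rewrite -eQ in fyQ.
have {}dQ : d < Q by rewrite ltn_neqAle dQ andbT; apply: contra dne => /eqP ->; rewrite fxQ fyQ.
have U0 : 0 < U := ltn_trans d0 dU.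
(* A word splitting from [x] at [U] agrees with [x] below [U], so it crosses [y] at [Q]. *)
have [a [aF /andP[UK faU] aU]] := max_split_attained U0.
have naU := neq_at_first_diff UK; rewrite aU in UK faU naU.
have fa_eq : forall k, 0 < k < U -> f a k = f x k.
  by move=> k' k'U; apply: (eq_before_first_diff (K := K)); rewrite aU.
have fyU : f y U by rewrite eU max_split_one // -eU.
have fad : f a d != f y d by rewrite fa_eq // d0 dU.
apply: (@F_noncrossing a y aF yF _ Q d U) => //.
- by apply: contra fad => /eqP ->.
- by rewrite QU UK.
- by rewrite fa_eq // (ltn_trans d0 dQ) QU.
- by move: naU; rewrite faU fyU; case: (f x U).
Qed.

Lemma size_noncrossing_family : size F <= K.+1 * K.+1.
Proof.
have sub : {subset map (fun x => (max_split x, max_one_below x)) F <=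
                   [seq (i, j) | i <- iota 0 K.+1, j <- iota 0 K.+1]}.
  move=> _ /mapP [x _ ->]; apply/allpairsP; exists (max_split x, max_one_below x).
  rewrite !mem_iota !leq0n !add0n !ltnS; split => //.
    by apply/bigmax_leqP_seq => y _; rewrite /split_from => /andP[].
  by apply/bigmax_leqP_seq => k; rewrite mem_iota => /andP[_ ?] _; lia.
have := uniq_leq_size _ sub; rewrite size_map size_allpairs !size_iota; apply.
by rewrite map_inj_in_uniq //; exact: signature_inj.
Qed.

End NoncrossingFamily.

(** * Pyramidal tours as cut sets *)

Definition consecutive_in (L : seq nat) (u w : nat) : Prop :=
  exists m, m.+1 < size L /\ nth 0 L m = u /\ nth 0 L m.+1 = w.

Lemma consecutive_sortedP L u w : sorted ltn L ->
  consecutive_in L u w <->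
  [/\ u \in L, w \in L, u < w & forall v, v \in L -> ~~ (u < v < w)].
Proof.
move=> sL; have lt_nth i j : i < size L -> j < size L -> i < j -> nth 0 L i < nth 0 L j.
  by move=> *; apply: (sorted_ltn_nth ltn_trans).
split.
  move=> [m [Hm [<- <-]]]; have mL : m < size L := ltnW Hm.
  split; [exact: mem_nth | exact: mem_nth | exact: lt_nth | move=> v vL].
  move: (index_mem v L) (nth_index 0 vL); rewrite vL; move: (index v L) => k kL Ev.
  case: (ltngtP k m) => km.
  - by have := lt_nth _ _ kL (ltnW Hm) km; rewrite Ev; lia.
  - case: (ltngtP m.+1 k) => k1; [| lia | by rewrite k1 Ev; lia].
    by have := lt_nth _ _ Hm kL k1; rewrite Ev; lia.
  - by rewrite -Ev km ltnn.
move=> [uL wL uw between].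
move: (index_mem u L) (nth_index 0 uL); rewrite uL; move: (index u L) => m mL Eu.
move: (index_mem w L) (nth_index 0 wL); rewrite wL; move: (index w L) => m' m'L Ew.
have mm' : m < m'.
  rewrite ltnNge leq_eqVlt; apply/negP => /orP[/eqP E | H].
    by move: uw; rewrite -Eu -Ew E ltnn.
  by have := lt_nth _ _ m'L mL H; rewrite Eu Ew; lia.
case: (ltngtP m.+1 m') => H; [| lia | by exists m; rewrite H Eu Ew].
have m1L : m.+1 < size L := ltn_trans H m'L.
have h1 : u < nth 0 L m.+1 by rewrite -Eu; apply: lt_nth.
have h2 : nth 0 L m.+1 < w by rewrite -Ew; apply: lt_nth.
by move/negP: (between _ (mem_nth 0 m1L)); rewrite h1 h2.
Qed.

Lemma consecutive_in_rev L u w : consecutive_in (rev L) u w <-> consecutive_in L w u.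
Proof.
have revP (L' : seq nat) u' w' : consecutive_in L' u' w' -> consecutive_in (rev L') w' u'.
  move=> [m [Hm [Hu Hw]]]; exists (size L' - m.+2); rewrite size_rev.
  split; first lia; rewrite !nth_rev; try lia.
  have -> : size L' - (size L' - m.+2).+1 = m.+1 by lia.
  by have -> : size L' - (size L' - m.+2).+2 = m by lia.
by split=> /revP //; rewrite revK.
Qed.

Lemma consecutive_in_cat A z B u w :
  consecutive_in (A ++ z :: B) u w <->
  consecutive_in (rcons A z) u w \/ consecutive_in (z :: B) u w.
Proof.
split.
  move=> [m [Hm [Hu Hw]]]; rewrite size_cat /= in Hm.
  case: (ltnP m (size A)) => HmA.
    left; exists m; rewrite size_rcons !nth_rcons HmA; split; first lia.
    move: Hu Hw; rewrite !nth_cat HmA => -> Hw; split => //.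
    case: (ltngtP m.+1 (size A)) => H1; [by rewrite H1 in Hw | lia |].
    by move: Hw; rewrite H1 ?ltnn ?eqxx subnn.
  right; exists (m - size A); split; first by rewrite /=; lia.
  move: Hu Hw; rewrite !nth_cat ltnNge HmA /= ltnNge (leqW HmA) /=.
  by rewrite (_ : m.+1 - size A = (m - size A).+1) //; lia.
case=> [[m [Hm [Hu Hw]]]|[m [Hm [Hu Hw]]]].
  rewrite size_rcons in Hm; exists m; rewrite size_cat /=; split; first lia.
  move: Hu Hw; rewrite !nth_rcons !nth_cat (_ : m < size A); last lia.
  move=> -> Hw; split => //.
  case: (ltngtP m.+1 (size A)) => H1; [by rewrite H1 in Hw | lia |].
  by move: Hw; rewrite H1 ?ltnn ?eqxx subnn.
exists (size A + m); rewrite size_cat; split; first by move: Hm => /=; lia.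
rewrite !nth_cat (_ : (size A + m < size A) = false); last lia.
by rewrite (_ : (size A + m).+1 < size A = false) ?addKn -?addnS ?addKn //; lia.
Qed.

Lemma next_consecutiveP x t u w : uniq (x :: t) -> u \in x :: t ->
  next (x :: t) u = w <-> consecutive_in (rcons (x :: t) x) u w.
Proof.
move=> U ut; have lastP m : m < size (x :: t) ->
    nth 0 (rcons (x :: t) x) m.+1 = nth x (x :: t) m.+1.
  rewrite /= ltnS nth_rcons => mt; case: ltnP => H1; first exact: set_nth_default.
  have -> : m = size t by apply/eqP; rewrite eqn_leq mt.
  by rewrite eqxx nth_default.
split.
  move=> <-; rewrite next_nth ut.
  have := index_mem u (x :: t); rewrite ut => Hm.
  exists (index u (x :: t)); rewrite size_rcons nth_rcons Hm nth_index // lastP //.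
by move=> [m [Hm [Hu Hw]]]; rewrite size_rcons in Hm; move: Hu Hw;
  rewrite nth_rcons (_ : m < size (x :: t)) // lastP // => Hu <-;
  rewrite next_nth ut -Hu index_uniq.
Qed.

(* A pyramidal tour splits the inner vertices [1 .. n-2] between its ascending
   and its descending path; for [0 < k < n.-2], [C k] says that [k] and [k.+1]
   lie on different paths.  Positions [0] and [n.-2] always count as cuts,
   because vertices [0] and [n.-1] lie on both paths. *)
Definition is_cut n (C : nat -> bool) k := (k == 0) || (k == n.-2) || C k.

Definition consecutive_cuts n C p q :=
  [&& is_cut n C p, is_cut n C q & all (fun k => ~~ is_cut n C k) (iota p.+1 (q - p.+1))].

(* A path jumps from [i] to [j > i.+1] exactly when [i] and [j.-1] are
   consecutive cuts: the vertices in between lie on the other path. *)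
Definition cut_edge n C i j :=
  if j == i.+1 then (i == 0) || (i == n.-2) || ~~ C i else consecutive_cuts n C i j.-1.

Definition cut_vec (R : realFieldType) n (C : nat -> bool) : {ffun 'I_n * 'I_n -> R} :=
  [ffun e : 'I_n * 'I_n => if (e.1 < e.2) && cut_edge n C e.1 e.2 then 1%R else 0%R].

Definition vec_cuts (R : realFieldType) n (v : {ffun 'I_n * 'I_n -> R}) k :=
  [exists e : 'I_n * 'I_n, [&& e.1 == k :> nat, e.2 == k.+1 :> nat & v e == 0%R]].

Definition splice_cuts (C1 C2 : nat -> bool) c k := if k <= c then C1 k else C2 k.

Lemma is_cut_inner n C k : 0 < k < n.-2 -> is_cut n C k = C k.
Proof.
move=> k_in; have k0 : (k == 0) = false by apply/eqP; lia.
have kn : (k == n.-2) = false by apply/eqP; lia.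
by rewrite /is_cut k0 kn.
Qed.

Lemma eq_is_cut n C1 C2 k : (forall k, 0 < k < n.-2 -> C1 k = C2 k) -> k <= n.-2 ->
  is_cut n C1 k = is_cut n C2 k.
Proof.
move=> eqC kn; rewrite /is_cut; case: (k =P 0) => //= /eqP k0.
by case: (k =P n.-2) => //= /eqP kn2; rewrite eqC //; lia.
Qed.

Lemma eq_consecutive_cuts n C1 C2 p q : p <= q ->
  (forall k, p <= k <= q -> is_cut n C1 k = is_cut n C2 k) ->
  consecutive_cuts n C1 p q = consecutive_cuts n C2 p q.
Proof.
move=> pq eqC; rewrite /consecutive_cuts !eqC ?leqnn ?pq //.
by congr [&& _, _ & _]; apply: eq_in_all => k; rewrite mem_iota => k_in; rewrite eqC //; lia.
Qed.

Lemma consecutive_cuts_cut_between n C p q c :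
  is_cut n C c -> p < c < q -> consecutive_cuts n C p q = false.
Proof.
move=> cc pcq; apply/negP => /and3P[_ _ /allP /(_ c)].
by rewrite mem_iota cc; move=> /(_ ltac:(lia)).
Qed.

Lemma eq_cut_edge n C1 C2 i j : (forall k, 0 < k < n.-2 -> C1 k = C2 k) ->
  i < j -> j < n -> cut_edge n C1 i j = cut_edge n C2 i j.
Proof.
move=> eqC ij jn; rewrite /cut_edge; case: (j =P i.+1) => [ji|/eqP ji].
  case: (i =P 0) => //= /eqP i0; case: (i =P n.-2) => //= /eqP in2.
  by rewrite eqC //; lia.
by apply: eq_consecutive_cuts => [|k k_in]; [lia | apply: eq_is_cut => //; lia].
Qed.

Lemma eq_cut_vec (R : realFieldType) n C1 C2 : (forall k, 0 < k < n.-2 -> C1 k = C2 k) ->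
  cut_vec R n C1 = cut_vec R n C2.
Proof.
move=> eqC; apply/ffunP => -[i j]; rewrite !ffunE /=.
by case: (ltnP i j) => //= ij; rewrite (eq_cut_edge eqC ij (ltn_ord j)).
Qed.

Lemma cut_vecE (R : realFieldType) n C (e : 'I_n * 'I_n) :
  cut_vec R n C e = ((((e.1 < e.2)%N && cut_edge n C e.1 e.2) : nat)%:R)%R.
Proof. by rewrite ffunE; case: ifP. Qed.

Lemma vec_cuts_cut_vec (R : realFieldType) n C k :
  0 < k < n.-2 -> vec_cuts (cut_vec R n C) k = C k.
Proof.
move=> k_in; have kn : k < n by lia.
have k1n : k.+1 < n by lia.
have -> : vec_cuts (cut_vec R n C) k = (cut_vec R n C (Ordinal kn, Ordinal k1n) == 0%R).
  apply/existsP/idP => [[[i j] /and3P[/eqP ik /eqP jk]] | v0].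
    have -> : i = Ordinal kn by apply: val_inj.
    by have -> : j = Ordinal k1n by apply: val_inj.
  by exists (Ordinal kn, Ordinal k1n); rewrite /= !eqxx.
rewrite ffunE /= ltnSn /cut_edge eqxx -/(is_cut n (negb \o C) k) is_cut_inner //=.
by case: (C k); rewrite ?oner_eq0 ?eqxx.
Qed.

Lemma cut_edge_splice n (C1 C2 : nat -> bool) c i j : 0 < c < n.-2 -> C1 c -> C2 c -> i < j ->
  (cut_edge n (splice_cuts C1 C2 c) i j : nat) + cut_edge n (splice_cuts C2 C1 c) i j
  = (cut_edge n C1 i j : nat) + cut_edge n C2 i j.
Proof.
move=> c_in C1c C2c ij; rewrite /cut_edge; case: (j =P i.+1) => [ji|/eqP ji].
  by rewrite /splice_cuts; case: (leqP i c) => _ //; rewrite addnC.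
have ij1 : i <= j.-1 by lia.
have splice_low (D1 D2 : nat -> bool) : j.-1 <= c ->
    consecutive_cuts n (splice_cuts D1 D2 c) i j.-1 = consecutive_cuts n D1 i j.-1.
  by move=> jc; apply: eq_consecutive_cuts => // k k_in; rewrite /is_cut /splice_cuts (_ : k <= c) //; lia.
have splice_high (D1 D2 : nat -> bool) : D1 c -> D2 c -> c <= i ->
    consecutive_cuts n (splice_cuts D1 D2 c) i j.-1 = consecutive_cuts n D2 i j.-1.
  move=> D1c D2c ci; apply: eq_consecutive_cuts => // k k_in; rewrite /is_cut /splice_cuts.
  by case: (leqP k c) => // kc; rewrite (_ : k = c) ?D1c ?D2c ?orbT //; lia.
case: (leqP j.-1 c) => jc; first by rewrite !splice_low.
case: (leqP c i) => ci; first by rewrite !splice_high // addnC.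
have icj : i < c < j.-1 by lia.
have cut_c (D : nat -> bool) : D c -> is_cut n D c by move=> Dc; rewrite /is_cut Dc !orbT.
by rewrite !(consecutive_cuts_cut_between (cut_c _ _) icj) // /splice_cuts leqnn.
Qed.

(* [side v] tells whether the inner vertex [v] lies on the ascending path. *)
Definition on_path n (side : nat -> bool) (up : bool) v :=
  (v == 0) || (v == n.-1) || (side v == up).

Definition side_change (side : nat -> bool) k := side k != side k.+1.

Definition path_hop n side up i j :=
  [/\ on_path n side up i, on_path n side up j &
      forall v, i < v < j -> ~~ on_path n side up v].

Lemma on_path_inner n side up v : 0 < v < n.-1 -> on_path n side up v = (side v == up).
Proof.
move=> v_in; have v0 : (v == 0) = false by apply/eqP; lia.
have vn : (v == n.-1) = false by apply/eqP; lia.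
by rewrite /on_path v0 vn.
Qed.

Lemma side_constant_between n side i j :
  (forall k, i < k < j.-1 -> ~~ is_cut n (side_change side) k) ->
  forall v, i < v < j -> side v = side i.+1.
Proof.
move=> no_cut v /andP[iv vj].
suff side_shift d : i.+1 + d < j -> side (i.+1 + d) = side i.+1.
  by rewrite -(subnKC iv); apply: side_shift; lia.
elim: d => [|d IH] dj; first by rewrite addn0.
have := no_cut (i.+1 + d) ltac:(lia); rewrite /is_cut /side_change !negb_or negbK.
by rewrite addnS => /andP[_ /eqP <-]; apply: IH; lia.
Qed.

Lemma path_hop_succ n side i : 2 < n -> i.+1 < n ->
  (exists up, path_hop n side up i i.+1) <-> cut_edge n (side_change side) i i.+1.
Proof.
move=> n3 in1; rewrite /cut_edge eqxx; split.
  move=> [up [Hi Hj _]].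
  case: (i =P 0) => //= /eqP i0; case: (i =P n.-2) => //= /eqP in2.
  move: Hi Hj; rewrite !on_path_inner; try lia.
  by rewrite /side_change => /eqP -> /eqP ->; rewrite eqxx.
have no_between v : i < v < i.+1 -> false by lia.
case: (i =P 0) => [i0|/eqP i0] /= H.
  by exists (side 1); split=> [||v /no_between //]; rewrite /on_path i0 ?eqxx ?orbT.
case: (i =P n.-2) => [E|/eqP in2] /= in H.
  exists (side i); split=> [||v /no_between //]; rewrite /on_path ?eqxx ?orbT //.
  by rewrite (_ : i.+1 = n.-1) ?eqxx ?orbT //; lia.
exists (side i); split=> [||v /no_between //]; rewrite /on_path ?eqxx ?orbT //.
by move: H; rewrite /side_change negbK => /eqP ->; rewrite eqxx !orbT.
Qed.

Lemma path_hop_far n side i j : i.+1 < j -> j < n ->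
  (exists up, path_hop n side up i j) <-> consecutive_cuts n (side_change side) i j.-1.
Proof.
move=> i2j jn; split.
  move=> [up [Hi Hj Hb]].
  have other v : i < v < j -> side v = ~~ up.
    move=> vij; have := Hb v vij; rewrite on_path_inner; last by lia.
    by case: (side v); case: (up).
  apply/and3P; split.
  - rewrite /is_cut; case: (i =P 0) => //= /eqP i0.
    have -> : (i == n.-2) = false by apply/eqP; lia.
    move: Hi; rewrite on_path_inner; last by lia.
    by rewrite /side_change (other i.+1) ?leqnn //; try lia; move=> /eqP ->; case: (up).
  - rewrite /is_cut; case: (j.-1 =P 0) => //= /eqP j0.
    case: (j.-1 =P n.-2) => //= /eqP jn2.
    move: Hj; rewrite on_path_inner; last by lia.
    rewrite /side_change (other j.-1); last by lia.
    by rewrite (_ : j.-1.+1 = j); [move=> /eqP ->; case: (up) | lia].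
  - apply/allP => k; rewrite mem_iota => k_in; rewrite is_cut_inner; last by lia.
    by rewrite /side_change (other k) ?(other k.+1) ?eqxx //; lia.
move=> /and3P[ci cj /allP no_cut].
have same v : i < v < j -> side v = side i.+1.
  by apply: (side_constant_between (n := n)) => k k_in; apply: no_cut; rewrite mem_iota; lia.
exists (~~ side i.+1); split.
- move: ci; rewrite /is_cut /on_path; case: (i =P 0) => //= /eqP i0.
  have -> : (i == n.-2) = false by apply/eqP; lia.
  have -> : (i == n.-1) = false by apply/eqP; lia.
  by rewrite /side_change /=; case: (side i); case: (side i.+1).
- move: cj; rewrite /is_cut /on_path; case: (j.-1 =P 0) => [|/eqP j0]; first lia.
  case: (j =P n.-1) => [->|/eqP jn1]; rewrite ?eqxx ?orbT //=.
  have -> : (j.-1 == n.-2) = false by apply/eqP; lia.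
  have -> : (j == 0) = false by apply/eqP; lia.
  rewrite /side_change (same j.-1); last by lia.
  by rewrite (_ : j.-1.+1 = j); [case: (side j); case: (side i.+1) | lia].
- move=> v vij; rewrite on_path_inner; last by lia.
  by rewrite (same v vij); case: (side i.+1).
Qed.

Lemma path_hopP n side i j : 2 < n -> i < j -> j < n ->
  (exists up, path_hop n side up i j) <-> cut_edge n (side_change side) i j.
Proof.
move=> n3 ij jn; case: (j =P i.+1) => [ji|/eqP ji]; first by subst j; exact: path_hop_succ.
have i2j : i.+1 < j by lia.
by rewrite /cut_edge (negbTE ji); exact: path_hop_far.
Qed.

Lemma consecutive_sorted_path (L : seq nat) n side up u w :
  sorted ltn L -> (forall v, v < n -> (v \in L) = on_path n side up v) -> u < w < n ->
  consecutive_in L u w <-> path_hop n side up u w.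
Proof.
move=> sL memL /andP[uw wn]; have un := ltn_trans uw wn.
rewrite consecutive_sortedP //; split.
  move=> [uL wL _ between]; rewrite /path_hop -!memL //; split => // v vuw.
  by rewrite -memL; [apply: contraL vuw => /between | lia].
move=> [Pu Pw between]; rewrite !memL //; split => // v vL; apply/negP => vuw.
by move: (between v vuw); rewrite -memL ?vL //; lia.
Qed.

Section PyramidalTour.

Variables (n : nat) (a b : seq nat).
Hypothesis n_gt2 : 2 < n.
Hypothesis tour_perm : perm_eq (0 :: a ++ n.-1 :: b) (iota 0 n).
Hypothesis a_sorted : sorted ltn a.
Hypothesis b_sorted : sorted [rel x y | y < x] b.

Local Notation tour := (0 :: a ++ n.-1 :: b).
Local Notation side := (fun v => v \in a).
Local Notation up_path := (0 :: rcons a n.-1).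
Local Notation down_path := (0 :: rcons (rev b) n.-1).

Let tour_uniq : uniq tour.
Proof. by rewrite (perm_uniq tour_perm) iota_uniq. Qed.

Let mem_tour v : (v \in tour) = (v < n).
Proof. by rewrite (perm_mem tour_perm) mem_iota. Qed.

Let inner_path v : (v \in a) || (v \in b) -> 0 < v < n.-1.
Proof.
move: tour_uniq; rewrite /= mem_cat inE negb_or cat_uniq /= negb_or.
move=> /and5P[/and3P[a0 _ b0] _ /norP[an _] bn _] vab.
have : v < n by rewrite -mem_tour inE mem_cat inE; case/orP: vab => ->; rewrite !orbT.
have : v != 0 by move: vab; apply: contraTneq => ->; rewrite negb_or a0.
have : v != n.-1 by move: vab; apply: contraTneq => ->; rewrite negb_or an.
lia.
Qed.

Let inner_a v : v \in a -> 0 < v < n.-1.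
Proof. by move=> va; apply: inner_path; rewrite va. Qed.

Let inner_b v : v \in b -> 0 < v < n.-1.
Proof. by move=> vb; apply: inner_path; rewrite vb orbT. Qed.

Let a_disjoint_b v : v \in a -> v \notin b.
Proof.
move: tour_uniq; rewrite /= cat_uniq /= => /and4P[_ _ /norP[_ /hasPn ab] _] va.
by apply: contraL va => /ab.
Qed.

Let up_path_sorted : sorted ltn up_path.
Proof.
rewrite (sorted_pairwise ltn_trans) /= pairwise_rcons -(sorted_pairwise ltn_trans) a_sorted.
rewrite all_rcons andbT -andbA; apply/and3P; split; first by lia.
  by apply/allP => v /inner_a; lia.
by apply/allP => v /inner_a; lia.
Qed.

Let down_path_sorted : sorted ltn down_path.
Proof.
rewrite (sorted_pairwise ltn_trans) /= pairwise_rcons -(sorted_pairwise ltn_trans).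
rewrite rev_sorted all_rcons -andbA b_sorted andbT; apply/and3P; split; first by lia.
  by apply/allP => v; rewrite mem_rev => /inner_b; lia.
by apply/allP => v; rewrite mem_rev => /inner_b; lia.
Qed.

Let mem_up_path v : v < n -> (v \in up_path) = on_path n side true v.
Proof.
move=> _; rewrite /on_path inE mem_rcons inE eqb_id.
by case: (v == 0); case: (v == n.-1); case: (v \in a).
Qed.

Let mem_down_path v : v < n -> (v \in down_path) = on_path n side false v.
Proof.
rewrite -mem_tour /on_path !inE mem_rcons inE mem_rev mem_cat inE.
case: (v =P 0) => //= _; case: (v =P n.-1) => //= _.
case/orP => [va|vb]; first by rewrite va (negbTE (a_disjoint_b va)).
by case va: (v \in a); [move: (a_disjoint_b va); rewrite vb | rewrite vb].
Qed.

Let next_tour u w : u < n ->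
  next tour u = w <-> consecutive_in up_path u w \/ consecutive_in down_path w u.
Proof.
move=> un; rewrite next_consecutiveP ?mem_tour // -cat_cons rcons_cat rcons_cons.
rewrite consecutive_in_cat.
have -> : n.-1 :: rcons b 0 = rev down_path by rewrite rev_cons rev_rcons revK.
by rewrite consecutive_in_rev.
Qed.

Lemma tour_edge_pyramidal i j : i < j < n ->
  tour_edge tour i j = cut_edge n (side_change side) i j.
Proof.
move=> /andP[ij jn]; have i_n := ltn_trans ij jn.
have hop_up u w : u < w < n -> consecutive_in up_path u w <-> path_hop n side true u w.
  exact: consecutive_sorted_path up_path_sorted mem_up_path.
have hop_down u w : u < w < n -> consecutive_in down_path u w <-> path_hop n side false u w.
  exact: consecutive_sorted_path down_path_sorted mem_down_path.
have no_back (L : seq nat) : sorted ltn L -> ~ consecutive_in L j i.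
  by move=> sL /consecutive_sortedP [] // _ _; rewrite ltnNge (ltnW ij).
rewrite /tour_edge; apply/idP/idP.
  case/orP => [/eqP/esym/(next_tour _ i_n) | /eqP/esym/(next_tour _ jn)] [hop|hop].
  - by apply/(path_hopP _ n_gt2 ij jn); exists true; apply/hop_up => //; rewrite ij.
  - by case: (no_back _ down_path_sorted hop).
  - by case: (no_back _ up_path_sorted hop).
  - by apply/(path_hopP _ n_gt2 ij jn); exists false; apply/hop_down => //; rewrite ij.
move/(path_hopP _ n_gt2 ij jn) => [[] hop]; apply/orP; [left | right].
  by apply/eqP/esym/(next_tour _ i_n); left; apply/hop_up => //; rewrite ij.
by apply/eqP/esym/(next_tour _ jn); right; apply/hop_down => //; rewrite ij.
Qed.

End PyramidalTour.

Lemma charvec_pyramidal (R : realFieldType) n (a b : seq nat) :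
  2 < n -> perm_eq (0 :: a ++ n.-1 :: b) (iota 0 n) ->
  sorted ltn a -> sorted [rel x y | y < x] b ->
  charvec R n (0 :: a ++ n.-1 :: b) = cut_vec R n (side_change (fun v => v \in a)).
Proof.
move=> n3 tour_perm a_sorted b_sorted; apply/ffunP => -[i j]; rewrite !ffunE /=.
by case: (ltnP i j) => //= ij; rewrite tour_edge_pyramidal // ij /=.
Qed.

Definition parity_side (C : nat -> bool) v := odd (count C (iota 1 v.-1)).

Lemma side_change_parity C k : 0 < k -> side_change (parity_side C) k = C k.
Proof.
move=> k0; rewrite /side_change /parity_side /=.
have -> : iota 1 k = iota 1 k.-1 ++ [:: k].
  have {1}-> : k = k.-1 + 1 by lia.
  by rewrite iotaD /= (_ : 1 + k.-1 = k) //; lia.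
by rewrite count_cat /= addn0 oddD; case: (odd _); case: (C k).
Qed.

Lemma pyramidal_of_cuts (R : realFieldType) n C : 2 < n ->
  exists s, pyramidal n s /\ charvec R n s = cut_vec R n C.
Proof.
move=> n3; pose inner := iota 1 n.-2.
pose a := filter (parity_side C) inner.
pose b := rev (filter (predC (parity_side C)) inner).
have a_sorted : sorted ltn a by apply: sorted_filter; [exact: ltn_trans | exact: iota_ltn_sorted].
have b_sorted : sorted [rel x y | y < x] b.
  by rewrite rev_sorted; apply: sorted_filter; [move=> x y z /=; lia | exact: iota_ltn_sorted].
have tour_perm : perm_eq (0 :: a ++ n.-1 :: b) (iota 0 n).
  have -> : iota 0 n = 0 :: inner ++ [:: n.-1].
    by rewrite -{1}(_ : 1 + (n.-2 + 1) = n) ?iotaD /=; [congr (_ :: _ ++ [:: _]) | ]; lia.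
  rewrite perm_cons -cat1s perm_catCA perm_sym perm_catC perm_sym /= perm_cons perm_sym.
  by rewrite -(perm_filterC (parity_side C) inner) perm_cat2l perm_sym perm_rev.
exists (0 :: a ++ n.-1 :: b); split; first by split=> //; split=> //; exists a, b.
rewrite charvec_pyramidal //; apply: eq_cut_vec => k k_in.
have mem_a v : 0 < v < n.-1 -> (v \in a) = parity_side C v.
  by move=> v_in; rewrite mem_filter mem_iota (_ : 1 <= v < 1 + n.-2) ?andbT //; lia.
rewrite /side_change !mem_a; try lia.
by rewrite -/(side_change (parity_side C) k) side_change_parity //; case/andP: k_in.
Qed.

Lemma PYRptsP (R : realFieldType) n (v : {ffun 'I_n * 'I_n -> R}) : 2 < n ->
  PYRpts v <-> exists C, v = cut_vec R n C.
Proof.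
move=> n3; split; last by move=> [C ->]; have [s [? <-]] := pyramidal_of_cuts R C n3; exists s.
move=> [s [[_ [tour_perm [a [b [s_def [a_sorted b_sorted]]]]]] ->]].
by rewrite s_def in tour_perm *; exists (side_change (fun v => v \in a)); apply: charvec_pyramidal.
Qed.

Lemma PYRpts_vec_cuts (R : realFieldType) n (v : {ffun 'I_n * 'I_n -> R}) : 2 < n ->
  PYRpts v -> v = cut_vec R n (vec_cuts v).
Proof.
move=> n3 /(PYRptsP _ n3) [C ->]; apply: eq_cut_vec => k k_in.
by rewrite vec_cuts_cut_vec.
Qed.

(** * Vertices of PYR(n) *)

Lemma ltr_sum_at (R : numDomainType) (I : finType) (P : pred I) (F G : I -> R) i0 :
  P i0 -> (F i0 < G i0)%R -> (forall i, P i -> (F i <= G i)%R) ->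
  (\sum_(i | P i) F i < \sum_(i | P i) G i)%R.
Proof.
move=> Pi0 ltFG leFG; rewrite (bigD1 i0) //= [ltRHS](bigD1 i0) //=.
by apply: ltr_leD => //; apply: ler_sum => i /andP[Pi _]; exact: leFG.
Qed.

Lemma ffun_neq (aT : finType) (rT : eqType) (x y : {ffun aT -> rT}) :
  x != y -> exists e, x e != y e.
Proof.
move=> xy; case: (boolP [exists e, x e != y e]) => [/existsP //|/existsPn same].
by case/eqP: xy; apply/ffunP => e; apply/eqP; move: (same e); rewrite negbK.
Qed.

Lemma cut_vec_diff (R : realFieldType) n C1 C2 :
  cut_vec R n C1 != cut_vec R n C2 ->
  exists e : 'I_n * 'I_n, (e.1 < e.2) && (cut_edge n C1 e.1 e.2 != cut_edge n C2 e.1 e.2).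
Proof.
move=> /ffun_neq [e]; rewrite !cut_vecE; case: (ltnP e.1 e.2) => /= e12; last by rewrite eqxx.
by move=> edge_ne; exists e; rewrite e12; apply: contra edge_ne => /eqP ->.
Qed.

Lemma cut_vec_neq (R : realFieldType) n C1 C2 k : 0 < k < n.-2 -> C1 k != C2 k ->
  cut_vec R n C1 != cut_vec R n C2.
Proof.
move=> k_in; apply: contra => /eqP eqC.
by rewrite -(@vec_cuts_cut_vec R n C1 k) // -(@vec_cuts_cut_vec R n C2 k) // eqC.
Qed.

(* Every 0/1 point [v] is exposed by the functional [2 v - 1]. *)
Lemma is_vertex_cut_vec (R : realFieldType) n C : 2 < n -> is_vertex (@PYRpts R n) (cut_vec R n C).
Proof.
move=> n3; split; first by apply/(PYRptsP _ n3); exists C.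
exists [ffun e => (2%:R * cut_vec R n C e - 1)%R].
move=> _ /(PYRptsP _ n3) [Cz ->] Cz_ne; have [e0 /andP[e0_lt e0_ne]] := cut_vec_diff Cz_ne.
apply: (ltr_sum_at (i0 := e0)) => // [|e e_lt]; rewrite !ffunE ?e0_lt ?e_lt /=.
  by move: e0_ne; case: (cut_edge n Cz _ _); case: (cut_edge n C _ _) => //= _; lra.
by case: (cut_edge n Cz _ _); case: (cut_edge n C _ _) => /=; lra.
Qed.

(** * A clique of quadratic size *)

Definition two_cuts (i j k : nat) := (k == i) || (k == j).

Definition next_cut n (C : nat -> bool) p := p.+1 + find (is_cut n C) (iota p.+1 (n.-2 - p)).

Lemma next_cutP n C p : p < n.-2 ->
  [/\ p < next_cut n C p, next_cut n C p <= n.-2, is_cut n C (next_cut n C p) &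
      forall k, p < k < next_cut n C p -> ~~ is_cut n C k].
Proof.
move=> pn; rewrite /next_cut; set f := find _ _.
have has_cut : has (is_cut n C) (iota p.+1 (n.-2 - p)).
  apply/hasP; exists n.-2; last by rewrite /is_cut eqxx orbT.
  by rewrite mem_iota pn /=; lia.
have fs : f < n.-2 - p by rewrite -(size_iota p.+1 (n.-2 - p)) -has_find.
split; [lia | lia | by move: (nth_find 0 has_cut); rewrite nth_iota |].
move=> k /andP[pk kq]; have kf : k - p.+1 < f by lia.
have := before_find 0 kf; rewrite nth_iota; last by lia.
by rewrite (_ : p.+1 + (k - p.+1) = k) => [->|]; lia.
Qed.

Lemma consecutive_next_cut n C p : p < n.-2 -> is_cut n C p ->
  consecutive_cuts n C p (next_cut n C p).
Proof.
move=> pn cp; have [pq _ cq no_cut] := next_cutP C pn.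
rewrite /consecutive_cuts cp cq; apply/allP => k; rewrite mem_iota => k_in.
by apply: no_cut; lia.
Qed.

Lemma cut_edge_far n C p q : p < q -> cut_edge n C p q.+1 = consecutive_cuts n C p q.
Proof. by move=> pq; rewrite /cut_edge eqSS (_ : (q == p) = false) //; apply/eqP; lia. Qed.

Lemma consecutive_cuts_two_cuts n i j p q : 0 < i < j -> j < n.-2 -> p < q <= n.-2 ->
  consecutive_cuts n (two_cuts i j) p q ->
  [|| (p == 0) && (q == i), (p == i) && (q == j) | (p == j) && (q == n.-2)].
Proof.
move=> ij jn pq /and3P[cp cq /allP no_cut].
have no_cut_at k : p < k < q -> ~~ is_cut n (two_cuts i j) k.
  by move=> k_in; apply: no_cut; rewrite mem_iota; lia.
have ni : ~~ (p < i < q).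
  by apply/negP => /no_cut_at; rewrite /is_cut /two_cuts eqxx !orbT.
have nj : ~~ (p < j < q).
  by apply/negP => /no_cut_at; rewrite /is_cut /two_cuts eqxx !orbT.
by move: cp cq; rewrite /is_cut /two_cuts; lia.
Qed.

Lemma two_cuts_of_next_cut n C a b : 0 < a < b -> b < n.-2 ->
  next_cut n C 0 = a -> next_cut n C a = b -> next_cut n C b = n.-2 ->
  forall k, 0 < k < n.-2 -> C k = two_cuts a b k.
Proof.
move=> ab bn E1 E2 E3 k k_in.
have n0 : 0 < n.-2 by lia.
have an : a < n.-2 by lia.
have [_ _ ca no_cut0] := next_cutP C n0.
have [_ _ cb no_cuta] := next_cutP C an.
have [_ _ _ no_cutb] := next_cutP C bn.
rewrite E1 in ca no_cut0; rewrite E2 in cb no_cuta; rewrite E3 in no_cutb.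
rewrite /two_cuts -(is_cut_inner C k_in).
case: (ltngtP k a) => ka; last by rewrite ka ca.
  by rewrite (_ : k == b = false); [apply/negbTE/no_cut0 | apply/eqP]; lia.
case: (ltngtP k b) => kb; last by rewrite kb cb orbT.
  by apply/negbTE/no_cuta; lia.
by apply/negbTE/no_cutb; lia.
Qed.

Section TwoCutTours.

Variables (n h i j i' j' : nat).
Hypothesis n_gt2 : 2 < n.
Hypotheses (i_le_h : 0 < i <= h) (h_lt_j : h < j < n.-2).
Hypotheses (i'_le_h : 0 < i' <= h) (h_lt_j' : h < j' < n.-2).

(* Both tours have three jumps 0 -> i -> j -> n-2 between consecutive cuts,
   and the first jump ends below [h] while the second ends above it; so a
   tour using only their edges must follow one of them jump by jump. *)
Lemma cuts_of_edges_in_union C :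
  (forall p q, p < q < n -> cut_edge n C p q ->
     cut_edge n (two_cuts i j) p q || cut_edge n (two_cuts i' j') p q) ->
  (forall k, 0 < k < n.-2 -> C k = two_cuts i j k) \/
  (forall k, 0 < k < n.-2 -> C k = two_cuts i' j' k).
Proof.
move=> in_union.
have jump p : p < n.-2 -> is_cut n C p ->
    [|| (p == 0) && (next_cut n C p == i), (p == i) && (next_cut n C p == j)
      | (p == j) && (next_cut n C p == n.-2)] ||
    [|| (p == 0) && (next_cut n C p == i'), (p == i') && (next_cut n C p == j')
      | (p == j') && (next_cut n C p == n.-2)].
  move=> pn cp; have [pq qn _ _] := next_cutP C pn.
  have /orP[e|e] : cut_edge n (two_cuts i j) p (next_cut n C p).+1 ||
                   cut_edge n (two_cuts i' j') p (next_cut n C p).+1.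
    by apply: in_union; [lia | rewrite cut_edge_far // consecutive_next_cut].
  - by rewrite (consecutive_cuts_two_cuts (i := i) (j := j)) -?cut_edge_far //; lia.
  - by rewrite (consecutive_cuts_two_cuts (i := i') (j := j')) -?cut_edge_far ?orbT //; lia.
have n0 : 0 < n.-2 by lia.
have [a0 _ ca _] := next_cutP C n0.
have c0 : is_cut n C 0 by rewrite /is_cut eqxx.
have J1 := jump _ n0 c0.
set a := next_cut n C 0 in a0 ca J1.
have an : a < n.-2 by lia.
have [ab _ cb _] := next_cutP C an; have J2 := jump _ an ca.
set b := next_cut n C a in ab cb J2.
have bn : b < n.-2 by lia.
have [_ cn _ _] := next_cutP C bn; have J3 := jump _ bn cb.
have b_end : next_cut n C b = n.-2 by lia.
have /orP[/andP[/eqP ai /eqP bj] | /andP[/eqP ai /eqP bj]] :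
    ((a == i) && (b == j)) || ((a == i') && (b == j')) by lia.
  by left; rewrite -ai -bj; apply: two_cuts_of_next_cut => //; lia.
by right; rewrite -ai -bj; apply: two_cuts_of_next_cut => //; lia.
Qed.

Lemma cut_vec_two_cuts_neq (R : realFieldType) : (i, j) != (i', j') ->
  cut_vec R n (two_cuts i j) != cut_vec R n (two_cuts i' j').
Proof.
case: (i =P i') => [-> | /eqP ii'] /=; rewrite ?xpair_eqE ?eqxx //= => jj'.
  by apply: (@cut_vec_neq _ _ _ _ j); rewrite /two_cuts ?eqxx ?orbT //=; lia.
by apply: (@cut_vec_neq _ _ _ _ i); rewrite /two_cuts ?eqxx //=; lia.
Qed.

Lemma edge_outside_two_cuts (R : realFieldType) C :
  cut_vec R n C != cut_vec R n (two_cuts i j) ->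
  cut_vec R n C != cut_vec R n (two_cuts i' j') ->
  exists e : 'I_n * 'I_n, [&& e.1 < e.2, cut_edge n C e.1 e.2,
    ~~ cut_edge n (two_cuts i j) e.1 e.2 & ~~ cut_edge n (two_cuts i' j') e.1 e.2].
Proof.
move=> ne1 ne2; apply/existsP; apply: contraR ne1 => /existsPn no_edge.
have in_union p q : p < q < n -> cut_edge n C p q ->
    cut_edge n (two_cuts i j) p q || cut_edge n (two_cuts i' j') p q.
  move=> /andP[pq qn] e; have pn : p < n by lia.
  by move: (no_edge (Ordinal pn, Ordinal qn)); rewrite /= pq e -negb_or negbK.
case: (cuts_of_edges_in_union in_union) => eqC; first by apply/eqP/eq_cut_vec.
by case/eqP: ne2; apply: eq_cut_vec.
Qed.

Lemma adjacent_two_cuts (R : realFieldType) : (i, j) != (i', j') ->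
  adjacent (@PYRpts R n) (cut_vec R n (two_cuts i j)) (cut_vec R n (two_cuts i' j')).
Proof.
move=> ij_ne; set x := cut_vec R n _; set y := cut_vec R n _.
split; first exact: cut_vec_two_cuts_neq.
split; first exact: is_vertex_cut_vec.
split; first exact: is_vertex_cut_vec.
pose c := [ffun e => if (x e == 0%R) && (y e == 0%R) then (-1 : R)%R else 0%R].
have dx : dotE c x = 0%R.
  by rewrite /dotE big1 // => e _; rewrite ffunE; case: (x e =P 0%R) => [->|_]; rewrite ?mulr0 ?mul0r.
have dy : dotE c y = 0%R.
  by rewrite /dotE big1 // => e _; rewrite ffunE; case: (y e =P 0%R) => [->|_]; rewrite ?mulr0 ?andbF ?mul0r.
exists c; split; first by rewrite dx dy.
move=> _ /(PYRptsP _ n_gt2) [C ->] zx zy.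
rewrite dx (_ : 0%R = \sum_(e : 'I_n * 'I_n | (e.1 < e.2)%N) (0 : R))%R; last by rewrite big1.
have [e0 /and4P[e0_lt e0_C e0_x e0_y]] := edge_outside_two_cuts zx zy.
apply: (ltr_sum_at (i0 := e0)) => // [|e _].
  by rewrite !ffunE /= e0_lt (negbTE e0_x) (negbTE e0_y) e0_C /= eqxx mulr1 ltrN10.
rewrite ffunE cut_vecE; case: ifP => _; last by rewrite mul0r.
by rewrite mulN1r oppr_le0 ler0n.
Qed.

End TwoCutTours.

Lemma half_bounds K : K./2 + K./2 <= K <= K./2 + K./2 + 1.
Proof. by have := odd_double_half K; rewrite -addnn; case: (odd K) => /= <-; lia. Qed.

Lemma exists_large_clique (R : realFieldType) n : 10 <= n ->
  exists Q, is_clique (@PYRpts R n) Q /\ n * n <= 64 * size Q.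
Proof.
move=> n10; have n3 : 2 < n by lia.
set K := n.-2.-1; set h := K./2.
pose P := [seq (i, j) | i <- iota 1 h, j <- iota h.+1 (K - h)].
pose Q := [seq cut_vec R n (two_cuts p.1 p.2) | p <- P].
have memP p : p \in P -> 0 < p.1 <= h /\ h < p.2 < n.-2.
  case: p => i j /allpairsP [[i' j'] [/= Hi Hj [-> ->]]].
  by move: Hi Hj; rewrite !mem_iota /K /h; lia.
have adjP p p' : p \in P -> p' \in P -> p != p' ->
    adjacent (@PYRpts R n) (cut_vec R n (two_cuts p.1 p.2)) (cut_vec R n (two_cuts p'.1 p'.2)).
  case: p p' => [i j] [i' j'] /memP[ih hj] /memP[i'h hj'].
  exact: (adjacent_two_cuts n3 ih hj i'h hj').
exists Q; split; last first.
  rewrite size_map size_allpairs !size_iota.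
  by have := half_bounds K; rewrite -/h /K; nia.
split.
  rewrite map_inj_in_uniq; last first.
    move=> p p' pP p'P E; apply/eqP/negPn/negP => pp'.
    by have [/eqP] := adjP _ _ pP p'P pp'.
  by apply: allpairs_uniq => [||[? ?] [? ?] _ _ /= [-> ->]] //; exact: iota_uniq.
split; first by move=> _ /mapP[p _ ->]; apply: is_vertex_cut_vec.
move=> _ _ /mapP[p pP ->] /mapP[p' p'P ->] xy.
by apply: adjP => //; apply: contra xy => /eqP ->.
Qed.

(** * Cliques have quadratic size *)

Lemma dotE_add_eq (R : realFieldType) n (c x y z w : {ffun 'I_n * 'I_n -> R}) :
  (forall e, x e + y e = z e + w e)%R -> (dotE c x + dotE c y = dotE c z + dotE c w)%R.
Proof.
by move=> xy_zw; rewrite /dotE -!big_split /=; apply: eq_bigr => e _; rewrite -!mulrDr xy_zw.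
Qed.

Lemma adjacent_cut_vec_noncrossing (R : realFieldType) n (C1 C2 : nat -> bool) c d1 d2 :
  2 < n -> 0 < d1 < c -> c < d2 < n.-2 -> C1 c -> C2 c ->
  C1 d1 != C2 d1 -> C1 d2 != C2 d2 ->
  ~ adjacent (@PYRpts R n) (cut_vec R n C1) (cut_vec R n C2).
Proof.
move=> n3 d1c cd2 C1c C2c ne1 ne2 [_ [_ [_ [f [f_eq f_max]]]]].
have c_in : 0 < c < n.-2 by lia.
have d1_in : 0 < d1 < n.-2 by lia.
have d2_in : 0 < d2 < n.-2 by lia.
have splice_d1 (D1 D2 : nat -> bool) : splice_cuts D1 D2 c d1 = D1 d1.
  by rewrite /splice_cuts (_ : d1 <= c) //; lia.
have splice_d2 (D1 D2 : nat -> bool) : splice_cuts D1 D2 c d2 = D2 d2.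
  by rewrite /splice_cuts (_ : d2 <= c = false) //; lia.
set z := cut_vec R n (splice_cuts C1 C2 c); set w := cut_vec R n (splice_cuts C2 C1 c).
have Pz : PYRpts z by apply/(PYRptsP _ n3); eexists.
have Pw : PYRpts w by apply/(PYRptsP _ n3); eexists.
have zx : z != cut_vec R n C1 by rewrite /z; apply: (cut_vec_neq _ d2_in); rewrite splice_d2 eq_sym.
have zy : z != cut_vec R n C2 by rewrite /z; apply: (cut_vec_neq _ d1_in); rewrite splice_d1.
have wx : w != cut_vec R n C1 by rewrite /w; apply: (cut_vec_neq _ d1_in); rewrite splice_d1 eq_sym.
have wy : w != cut_vec R n C2 by rewrite /w; apply: (cut_vec_neq _ d2_in); rewrite splice_d2.
have same_sum : (dotE f (cut_vec R n C1) + dotE f (cut_vec R n C2) = dotE f z + dotE f w)%R.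
  apply: dotE_add_eq => e; rewrite !cut_vecE -!natrD.
  by case: (ltnP e.1 e.2) => //= e12; rewrite (cut_edge_splice c_in C1c C2c e12).
have := f_max _ Pz zx zy; have := f_max _ Pw wx wy.
by move: same_sum; rewrite -f_eq; lra.
Qed.

Lemma size_clique_le (R : realFieldType) n (Q : seq {ffun 'I_n * 'I_n -> R}) :
  2 < n -> is_clique (@PYRpts R n) Q -> size Q <= n.-2 * n.-2.
Proof.
move=> n3 [Q_uniq [Q_vertex Q_adj]].
have Q_cuts x : x \in Q -> x = cut_vec R n (vec_cuts x).
  by move=> /Q_vertex[Px _]; exact: PYRpts_vec_cuts.
rewrite (_ : n.-2 = n.-2.-1.+1); last by lia.
apply: (size_noncrossing_family (f := @vec_cuts R n)) => // [x y xQ yQ xy | x y xQ yQ xy c d1 d2].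
  case: (boolP [exists k : 'I_n, (0 < k <= n.-2.-1) && (vec_cuts x k != vec_cuts y k)]).
    by move=> /existsP[k /andP[k_in ne]]; exists k.
  move=> /existsPn same_cuts; case/eqP: xy.
  rewrite (Q_cuts x xQ) (Q_cuts y yQ); apply: eq_cut_vec => k k_in.
  have kn : k < n by lia.
  have k_le : (0 < k <= n.-2.-1) = true by lia.
  by move: (same_cuts (Ordinal kn)); rewrite /= k_le negbK => /eqP.
move=> d1c cd2 xc yc ne1 ne2; have := Q_adj x y xQ yQ xy; rewrite (Q_cuts x xQ) (Q_cuts y yQ).
by apply: (adjacent_cut_vec_noncrossing n3 _ _ xc yc ne1 ne2); lia.
Qed.

Local Open Scope ring_scope.
Unset Implicit Arguments.

Theorem theorem6 (R : realFieldType) :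
  exists (c1 c2 : R) (N : nat), 0 < c1 /\ 0 < c2 /\
    forall n : nat, (N <= n)%N ->
      (exists Q, is_clique (@PYRpts R n) Q /\ c1 * (n%:R ^+ 2) <= (size Q)%:R) /\
      (forall Q, is_clique (@PYRpts R n) Q -> (size Q)%:R <= c2 * (n%:R ^+ 2)).
Proof.
exists 64%:R^-1, 1, 10; split; first by rewrite invr_gt0 ltr0n.
split=> // n n10; split.
  have [Q [Q_clique Q_size]] := exists_large_clique R n10.
  exists Q; split => //.
  by rewrite mulrC ler_pdivrMr ?ltr0n // -natrX -natrM ler_nat mulnC expnS expn1.
move=> Q /(size_clique_le (_ : (2 < n)%N)) Q_size.
rewrite mul1r -natrX ler_nat expnS expn1 (leq_trans (Q_size _)) //; first by lia.
by apply: leq_mul; lia.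
Qed.
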